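(* For all integers $n\ge1$ and $0\le i\le n-1$, the simplicial shelling components satisfy $$\Theta(\check{\Phi}_{n,i})=q^{i}\cdot[2(n-i)]\cdot[n-1]!.$$
   Context: $\mathbf{a},\mathbf{b}$ are non-commuting variables and $\mathbf{c}=\mathbf{a}+\mathbf{b}$. For a graded poset $P$ of rank $m+1$ with minimum $\hat0$, maximum $\hat1$ and rank function $\rho$, its $\mathbf{a}\mathbf{b}$-index is $\Psi(P)=\sum_{S\subseteq\{1,\dots,m\}} f_S\, v_S$, where for $S=\{s_1<\cdots<s_k\}$, $f_S$ is the number of chains $\hat0<x_1<\cdots<x_k<\hat1$ with $\rho(x_i)=s_i$, and $v_S=v_1\cdots v_m$ with $v_i=\mathbf{b}$ if $i\in S$, $v_i=\mathbf{a}-\mathbf{b}$ otherwise. $B_n$ is the Boolean algebra of rank $n$. $G$ is the derivation of $\mathbb{Z}\langle\mathbf{a},\mathbf{b}\rangle$ with $G(1)=0$, $G(\mathbf{a})=\mathbf{b}\mathbf{a}$, $G(\mathbf{b})=\mathbf{a}\mathbf{b}$. The simplicial shelling components are defined by $\check{\Phi}_{n,0}=\Psi(B_n)\cdot\mathbf{c}$ for $n\ge1$ and $\check{\Phi}_{n,i}=G(\check{\Phi}_{n-1,i-1})$ for $1\le i\le n-1$. The Major MacMahon map $\Theta:\mathbb{Z}\langle\mathbf{a},\mathbf{b}\rangle\to\mathbb{Z}[q]$ is linear with $\Theta(u_1\cdots u_n)=\prod_{i:\,u_i=\mathbf{b}}q^i$ on monomials. $[m]=1+q+\cdots+q^{m-1}$,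 $[m]!=[m]\cdots[1]$, $[0]!=1$. *)

From mathcomp Require Import all_boot all_order all_algebra.
Set Implicit Arguments. Unset Strict Implicit. Unset Printing Implicit Defensive.
Import GRing.Theory.
Local Open Scope ring_scope.

(* A letter is a bool: false = a, true = b.  A monomial is a word. *)
Definition word := seq bool.
(* An element of Z<a,b> is represented by a formal (unreduced) sum of
   coefficient-word pairs; all maps considered below are defined as the
   linear extensions of their values on words, hence are well defined on
   the free algebra. *)
Definition abpoly := seq (int * word).

Definition ab_one : abpoly := [:: (1%:Z, [::])].
Definition ab_a : abpoly := [:: (1%:Z, [:: false])].
Definition ab_b : abpoly := [:: (1%:Z, [:: true])].
Definition ab_add (p q : abpoly) : abpoly := p ++ q.
Definition ab_scale (k : int) (p : abpoly) : abpoly :=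
  [seq (k * t.1, t.2) | t <- p].
Definition ab_opp (p : abpoly) : abpoly := ab_scale (-1) p.
Definition ab_mul (p q : abpoly) : abpoly :=
  [seq (t.1 * s.1, t.2 ++ s.2) | t <- p, s <- q].
Definition ab_sum (ps : seq abpoly) : abpoly := flatten ps.

Definition ab_c : abpoly := ab_add ab_a ab_b.

(* B_n = subsets of 'I_n, rank function = cardinality; rank n, so m = n-1.
   A subset S of {1,...,m} is encoded as S : {set 'I_(n.-1)}, where
   j : 'I_(n.-1) stands for the rank j+1. *)

(* f_S : number of chains 0 < x_1 < ... < x_k < 1 in B_n with rho(x_i) = s_i.
   Such a chain is encoded as a function X on 'I_(n.-1) with X j the
   element of rank j+1 for j in S (and X j = set0 for j not in S). *)
Definition flagf (n : nat) (S : {set 'I_(n.-1)}) : nat :=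
  #|[set X : {ffun 'I_(n.-1) -> {set 'I_n}} |
      [&& [forall j, (j \notin S) ==> (X j == set0)],
          [forall j in S, #|X j| == (j : nat).+1] &
          [forall j in S, forall j' in S, ((j : nat) < j')%N ==> (X j \proper X j')]]]|.

Definition vS (m : nat) (S : {set 'I_m}) : abpoly :=
  foldr ab_mul ab_one
    [seq (if j \in S then ab_b else ab_add ab_a (ab_opp ab_b)) | j <- enum 'I_m].

Definition PsiB (n : nat) : abpoly :=
  ab_sum [seq ab_scale (flagf T)%:Z (vS T) | T <- enum {set 'I_(n.-1)}].

Definition G_letter (x : bool) : word :=
  if x then [:: false; true] (* G(b) = ab *) else [:: true; false] (* G(a) = ba *).

(* Leibniz rule on a word: sum over positions of replacing the letter *)
Definition G_word (w : word) : abpoly :=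
  [seq (1%:Z, take j w ++ G_letter (nth false w j) ++ drop j.+1 w) | j <- iota 0 (size w)].

Definition G (p : abpoly) : abpoly :=
  ab_sum [seq ab_scale t.1 (G_word t.2) | t <- p].

Fixpoint PhiCheck (n i : nat) : abpoly :=
  match i with
  | 0 => ab_mul (PsiB n) ab_c
  | i'.+1 => G (PhiCheck n.-1 i')
  end.

Definition maj_exp (w : word) : nat :=
  \sum_(j < size w | nth false w j) (j.+1)%N.

Definition Theta (p : abpoly) : {poly int} :=
  \sum_(t <- p) t.1%:P * 'X^(maj_exp t.2).

Definition qint (m : nat) : {poly int} := \sum_(j < m) 'X^j.
Definition qfact (m : nat) : {poly int} := \prod_(k < m) qint k.+1.

(* Θ is multiplicative along concatenation once the second factor is read with
   shifted positions, and on a word w of length d the derivation G acts as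
   multiplication by q [d] (inserting the new letter at position j + 1 raises
   the major index by j + 1).  Hence Θ(Φ̌_{n,i}) = q^i [n-1]…[n-i] Θ(Φ̌_{n-i,0}),
   and Θ(Φ̌_{m,0}) = Θ(Ψ(B_m)) (1 + q^m).  Finally Θ(Ψ(B_m)) = [m]! follows from
   the flag numbers of B_m (products of binomial coefficients) by a recursion on
   the largest rank used, and [m]! (1 + q^m) = [2m] [m-1]!. *)

From mathcomp Require Import all_boot all_order all_algebra.
From mathcomp Require Import ring zify.
Set Implicit Arguments. Unset Strict Implicit. Unset Printing Implicit Defensive.
Import GRing.Theory.

Section Chains.
Variables m n : nat.
Implicit Types (Y Z : {set 'I_n}) (T : {set 'I_m}) (X : {ffun 'I_m -> {set 'I_n}}).

Definition chains Y T : {set {ffun 'I_m -> {set 'I_n}}} :=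
  [set X : {ffun 'I_m -> {set 'I_n}} | [&& [forall j, (j \notin T) ==> (X j == set0)],
              [forall j in T, #|X j| == (j : nat).+1],
              [forall j in T, forall j' in T, ((j : nat) < j')%N ==> (X j \proper X j')] &
              [forall j in T, X j \subset Y]]].

Lemma chainsP Y T X :
  reflect [/\ forall j, j \notin T -> X j = set0,
              forall j, j \in T -> #|X j| = (j : nat).+1,
              forall j j', j \in T -> j' \in T -> (j < j')%N -> X j \proper X j' &
              forall j, j \in T -> X j \subset Y] (X \in chains Y T).
Proof.
rewrite inE; apply: (iffP and4P).
  move=> [/forallP H1 /forall_inP H2 /forall_inP H3 /forall_inP H4]; split.
  - by move=> j hj; apply/eqP; move: (H1 j); rewrite hj.
  - by move=> j hj; apply/eqP; apply: H2.
  - by move=> j j' hj hj' hlt; move/forall_inP: (H3 j hj) => /(_ j' hj'); rewrite hlt.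
  - exact: H4.
move=> [H1 H2 H3 H4]; split.
- by apply/forallP => j; apply/implyP => hj; rewrite H1.
- by apply/forall_inP => j hj; rewrite H2.
- by apply/forall_inP => j hj; apply/forall_inP => j' hj'; apply/implyP; apply: H3.
- by apply/forall_inP.
Qed.

Lemma chains_set0 Y : chains Y set0 = [set [ffun=> set0]].
Proof.
apply/setP => X; rewrite in_set1; apply/chainsP/eqP => [[H1 _ _ _]|->].
  by apply/ffunP => j; rewrite ffunE H1 ?inE.
by split => // j; rewrite ?inE ?ffunE.
Qed.

Definition set_at (j0 : 'I_m) Z X : {ffun 'I_m -> {set 'I_n}} :=
  [ffun j => if j == j0 then Z else X j].

Section TopRank.
Variables (T : {set 'I_m}) (j0 : 'I_m).
Hypotheses (j0T : j0 \notin T) (T_lt_j0 : forall j, j \in T -> (j < j0)%N).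

Let neq_j0 j : j \in T -> (j == j0) = false.
Proof. by move=> jT; apply: contraNF j0T => /eqP <-. Qed.

Lemma chains_top_fibre Y Z : Z \subset Y -> #|Z| = j0.+1 ->
  [set X in chains Y (j0 |: T) | X j0 == Z] = set_at j0 Z @: chains Z T.
Proof.
move=> ZY cZ; apply/setP => X; apply/idP/imsetP.
  rewrite inE => /andP [/chainsP [H1 H2 H3 H4] /eqP XZ].
  exists (set_at j0 set0 X); last first.
    by apply/ffunP => j; rewrite !ffunE; case: eqVneq => [->|].
  apply/chainsP; split => [j|j jT|j j' jT j'T|j jT]; rewrite !ffunE.
  - by case: eqVneq => // ne jT; apply: H1; rewrite in_setU1 negb_or ne.
  - by rewrite neq_j0 // H2 // in_setU1 jT orbT.
  - by rewrite !neq_j0 //; apply: H3; rewrite // in_setU1 ?jT ?j'T orbT.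
  - rewrite neq_j0 // -XZ; apply: proper_sub; apply: H3 (T_lt_j0 jT).
      by rewrite in_setU1 jT orbT.
    by rewrite setU11.
move=> [X' /chainsP [H1 H2 H3 H4] ->{X}].
have below_Z j : j \in T -> X' j \proper Z.
  by move=> jT; rewrite properEcard H4 //= H2 // cZ; apply: T_lt_j0.
rewrite inE; apply/andP; split; last by rewrite /set_at ffunE eqxx.
apply/chainsP.
split => [j|j|j j'|j]; rewrite ?in_setU1 !ffunE.
- by rewrite negb_or => /andP [/negPf -> /H1].
- by case/orP => [/eqP ->|jT]; rewrite ?eqxx ?neq_j0 ?H2.
- case/orP => [/eqP ->|jT] /orP [/eqP ->|j'T] hlt; rewrite ?eqxx ?neq_j0 //.
  + by rewrite ltnn in hlt.
  + by have := T_lt_j0 j'T; lia.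
  + exact: below_Z.
  + exact: H3.
- case/orP => [/eqP ->|jT]; rewrite ?eqxx ?neq_j0 //.
  exact: subset_trans (proper_sub (below_Z j jT)) ZY.
Qed.

Lemma card_chains_setU1 Y :
  #|chains Y (j0 |: T)| =
  (\sum_(Z : {set 'I_n} | (Z \subset Y) && (#|Z| == j0.+1)) #|chains Z T|)%N.
Proof.
rewrite -sum1_card (partition_big (fun X : {ffun 'I_m -> {set 'I_n}} => X j0)
  (fun Z => (Z \subset Y) && (#|Z| == j0.+1))) /=; last first.
  by move=> X /chainsP [_ H2 _ H4]; rewrite H4 ?H2 ?setU11 ?eqxx.
apply: eq_bigr => Z /andP [ZY /eqP cZ].
have set_at_inj : {in chains Z T &, injective (set_at j0 Z)}.
  move=> X1 X2 /chainsP [H1 _ _ _] /chainsP [H2 _ _ _] /ffunP E.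
  apply/ffunP => j; have := E j; rewrite !ffunE; case: eqVneq => [->|//] _.
  by rewrite H1 ?H2.
rewrite -(card_in_imset set_at_inj) -(chains_top_fibre ZY cZ) sum1dep_card.
by apply: eq_card => X; rewrite !inE.
Qed.

End TopRank.

Lemma sum_subsets_card_const Y k c :
  (\sum_(Z : {set 'I_n} | (Z \subset Y) && (#|Z| == k)) c)%N = ('C(#|Y|, k) * c)%N.
Proof.
rewrite sum_nat_const -(cards_draws Y k); congr (_ * _)%N.
by apply: eq_card => Z; rewrite inE.
Qed.

Lemma card_chains_eq_card T Z1 Z2 :
  #|Z1| = #|Z2| -> #|chains Z1 T| = #|chains Z2 T|.
Proof.
move: {2}#|T| (erefl #|T|) => k; elim: k T Z1 Z2 => [|k IH] T Z1 Z2 cT cZ.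
  by move/eqP: cT; rewrite cards_eq0 => /eqP ->; rewrite !chains_set0.
have [j1 j1T] : exists j1, j1 \in T by apply/set0Pn; rewrite -card_gt0 cT.
case: (arg_maxnP (fun j : 'I_m => j : nat) j1T) => j0 j0T j0_max.
have {}j0T : j0 \in T by [].
have j0T' : j0 \notin T :\ j0 by rewrite !inE eqxx.
have below_j0 j : j \in T :\ j0 -> (j < j0)%N.
  by rewrite !inE ltn_neqAle -val_eqE => /andP [-> /j0_max].
have cT' : #|T :\ j0| = k by move: cT; rewrite (cardsD1 j0) j0T add1n => -[].
rewrite -(setD1K j0T) !card_chains_setU1 //.
have [/existsP [Z0 /eqP cZ0]|/existsPn none] := boolP [exists Z : {set 'I_n}, #|Z| == j0.+1].
  have to_Z0 Y : (\sum_(Z : {set 'I_n} | (Z \subset Y) && (#|Z| == j0.+1)) #|chains Z (T :\ j0)|)%N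
      = ('C(#|Y|, j0.+1) * #|chains Z0 (T :\ j0)|)%N.
    rewrite -sum_subsets_card_const; apply: eq_bigr => Z /andP [_ /eqP cZ'].
    by apply: IH; rewrite // cZ' cZ0.
  by rewrite !to_Z0 cZ.
by rewrite !big_pred0 // => Z; rewrite (negbTE (none Z)) andbF.
Qed.

Definition prefix_set N : {set 'I_n} := [set i : 'I_n | (i < N)%N].

Lemma card_prefix_set N : (N <= n)%N -> #|prefix_set N| = N.
Proof.
elim: N => [|N IH] hN.
  by apply/eqP; rewrite cards_eq0; apply/eqP/setP => i; rewrite !inE.
have -> : prefix_set N.+1 = Ordinal hN |: prefix_set N.
  by apply/setP => i; rewrite !inE ltnS leq_eqVlt -val_eqE.
by rewrite cardsU1 IH ?(ltnW hN) // !inE ltnn.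
Qed.

Lemma card_chains_prefix_setU1 T (j0 : 'I_m) N :
  j0 \notin T -> (forall j, j \in T -> (j < j0)%N) -> (j0 < n)%N -> (N <= n)%N ->
  #|chains (prefix_set N) (j0 |: T)|
    = ('C(N, j0.+1) * #|chains (prefix_set j0.+1) T|)%N.
Proof.
move=> j0T T_lt_j0 j0_lt_n N_le_n; rewrite card_chains_setU1 //.
rewrite (eq_bigr (fun=> #|chains (prefix_set j0.+1) T|)).
  by rewrite sum_subsets_card_const card_prefix_set.
by move=> Z /andP [_ /eqP cZ]; apply: card_chains_eq_card; rewrite cZ card_prefix_set.
Qed.

End Chains.

Lemma flagf_chains n (T : {set 'I_n.-1}) : flagf T = #|chains (prefix_set n n) T|.
Proof.
apply: eq_card => X; rewrite !inE.
have -> : [forall j in T, X j \subset prefix_set n n] = true.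
  by apply/forall_inP => j _; apply/subsetP => i _; rewrite inE.
by rewrite andbT.
Qed.

Local Open Scope ring_scope.

Fixpoint maj_from (s : nat) (w : word) : nat :=
  if w is x :: w' then ((if x then s.+1 else 0) + maj_from s.+1 w')%N else 0%N.

Lemma maj_from_cat s u v : maj_from s (u ++ v) = (maj_from s u + maj_from (s + size u) v)%N.
Proof.
elim: u s => [|x u IH] s /=; first by rewrite addn0.
by rewrite IH addSnnS addnA.
Qed.

Lemma maj_from_rcons s u x :
  maj_from s (rcons u x) = (maj_from s u + (if x then s + (size u).+1 else 0))%N.
Proof. by rewrite -cats1 maj_from_cat /=; case: x => /=; lia. Qed.

Lemma maj_from_sum s w : maj_from s w = (\sum_(j < size w | nth false w j) (j.+1 + s))%N.
Proof.
elim: w s => [|x w IH] s /=; first by rewrite big_ord0.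
rewrite big_mkcond big_ord_recl IH [in RHS]big_mkcond /=; congr (_ + _)%N.
by rewrite big_mkcond; apply: eq_bigr => i _; rewrite /bump /= add1n add0n addnS.
Qed.

Lemma maj_exp_from0 w : maj_exp w = maj_from 0 w.
Proof. by rewrite maj_from_sum; apply: eq_bigr => i _; rewrite addn0. Qed.

Definition ThetaS s (p : abpoly) : {poly int} :=
  \sum_(t <- p) t.1%:P * 'X^(maj_from s t.2).

Lemma Theta_ThetaS0 p : Theta p = ThetaS 0 p.
Proof. by apply: eq_bigr => t _; rewrite maj_exp_from0. Qed.

Lemma ThetaS_cat s p q : ThetaS s (p ++ q) = ThetaS s p + ThetaS s q.
Proof. exact: big_cat. Qed.

Lemma ThetaS_scale s k p : ThetaS s (ab_scale k p) = k%:P * ThetaS s p.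
Proof.
rewrite /ThetaS big_map mulr_sumr; apply: eq_bigr => t _ /=.
by rewrite polyCM mulrA.
Qed.

Lemma ThetaS_sum s ps : ThetaS s (ab_sum ps) = \sum_(p <- ps) ThetaS s p.
Proof.
elim: ps => [|p ps IH]; first by rewrite /ThetaS !big_nil.
by rewrite /ab_sum /= ThetaS_cat IH big_cons.
Qed.

Definition homogeneous d (p : abpoly) := all (fun t => size t.2 == d) p.

Lemma ThetaS_mul d s u p :
  homogeneous d u -> ThetaS s (ab_mul u p) = ThetaS s u * ThetaS (s + d)%N p.
Proof.
move=> /allP u_d; rewrite /ThetaS big_allpairs_dep /= mulr_suml.
apply: eq_big_seq => t /u_d /eqP size_t; rewrite mulr_sumr.
by apply: eq_bigr => r _ /=; rewrite maj_from_cat size_t polyCM exprD; ring.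
Qed.

Lemma homogeneous_mul d e u p :
  homogeneous d u -> homogeneous e p -> homogeneous (d + e)%N (ab_mul u p).
Proof.
move=> /allP u_d /allP p_e; apply/allP => z /allpairsP [[t r] [/u_d /eqP Ht /p_e /eqP Hr ->]].
by rewrite /= size_cat Ht Hr.
Qed.

Lemma homogeneous_scale d k p : homogeneous d p -> homogeneous d (ab_scale k p).
Proof. by rewrite /homogeneous all_map. Qed.

Lemma homogeneous_sum d ps : all (homogeneous d) ps -> homogeneous d (ab_sum ps).
Proof.
elim: ps => //= p ps IH /andP [hp hps].
by rewrite /homogeneous /ab_sum /= all_cat; apply/andP; split; [exact: hp | exact: IH].
Qed.

Lemma qintS k : qint k.+1 = qint k + 'X^k.
Proof. by rewrite /qint big_ord_recr. Qed.

Lemma qintSl k : qint k.+1 = 1 + 'X * qint k.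
Proof.
rewrite /qint big_ord_recl expr0 mulr_sumr; congr (_ + _).
by apply: eq_bigr => i _; rewrite exprS.
Qed.

Lemma qintD a b : qint (a + b) = qint a + 'X^a * qint b.
Proof.
rewrite /qint big_split_ord mulr_sumr; congr (_ + _).
by apply: eq_bigr => j _; rewrite exprD.
Qed.

Lemma qfactS k : qfact k.+1 = qfact k * qint k.+1.
Proof. by rewrite /qfact big_ord_recr. Qed.

Definition G_at (w : word) j := take j w ++ G_letter (nth false w j) ++ drop j.+1 w.

Lemma ThetaS0_G_word_sum w :
  ThetaS 0 (G_word w) = \sum_(0 <= j < size w) 'X^(maj_from 0 (G_at w j)).
Proof.
rewrite /ThetaS /G_word big_map /index_iota subn0.
by apply: eq_bigr => j _ /=; rewrite polyC1 mul1r.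
Qed.

Lemma G_at_rcons w x j : (j < size w)%N -> G_at (rcons w x) j = rcons (G_at w j) x.
Proof.
move=> jw; rewrite /G_at drop_rcons // nth_rcons jw -!cats1 takel_cat ?(ltnW jw) //.
by rewrite !catA.
Qed.

(* Replacing a letter at position [j + 1] by its image under [G] adds [j + 1] to
   the major index when [b] becomes [ab] and [j + 2] when [a] becomes [ba]; summing
   over [j] gives the factor [q [|w|]]. *)
Lemma ThetaS0_G_word w : ThetaS 0 (G_word w) = 'X * qint (size w) * 'X^(maj_from 0 w).
Proof.
elim/last_ind: w => [|w x IH].
  by rewrite ThetaS0_G_word_sum big_geq // /qint big_ord0 mulr0 mul0r.
rewrite ThetaS0_G_word_sum size_rcons big_nat_recr //=.
rewrite (eq_big_nat _ _ (F2 := fun j =>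
  'X^(maj_from 0 (G_at w j)) * 'X^(if x then (size w).+2 else 0))); last first.
  move=> j /andP [_ jw]; rewrite G_at_rcons // maj_from_rcons exprD.
  rewrite /G_at !size_cat size_take jw size_drop.
  by congr (_ * 'X^ _); case: (x) => //=; case: (nth false w j) => /=; lia.
rewrite -big_distrl /= -ThetaS0_G_word_sum IH /G_at -cats1 takel_cat // take_size.
rewrite nth_cat ltnn subnn /= drop_oversize ?size_cat ?addn1 // cats0 !maj_from_cat qintS.
case: x => /=; rewrite ?add0n ?addn0.
  by rewrite -qintS qintSl !exprD !exprS; ring.
by rewrite expr0 exprD exprS; ring.
Qed.

Lemma homogeneous_G_word w : homogeneous (size w).+1 (G_word w).
Proof.
apply/allP => t /mapP [j]; rewrite mem_iota add0n => /andP [_ jw] ->{t} /=.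
by rewrite !size_cat size_take jw size_drop; case: (nth false w j) => /=; apply/eqP; lia.
Qed.

Lemma homogeneous_G d p : homogeneous d p -> homogeneous d.+1 (G p).
Proof.
move=> /allP p_d; apply: homogeneous_sum; apply/allP => q /mapP [t /p_d /eqP <- ->].
exact/homogeneous_scale/homogeneous_G_word.
Qed.

Lemma ThetaS0_G d p : homogeneous d p -> ThetaS 0 (G p) = 'X * qint d * ThetaS 0 p.
Proof.
move=> /allP p_d; rewrite /G ThetaS_sum big_map {2}/ThetaS mulr_sumr.
apply: eq_big_seq => t /p_d /eqP size_t.
by rewrite ThetaS_scale ThetaS0_G_word size_t; ring.
Qed.

Lemma ThetaS_ab_one s : ThetaS s ab_one = 1.
Proof. by rewrite /ThetaS big_seq1 /= polyC1 mul1r expr0. Qed.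

Lemma ThetaS_prod_ord m s (F : 'I_m -> abpoly) : (forall j, homogeneous 1%N (F j)) ->
  ThetaS s (foldr ab_mul ab_one [seq F j | j <- enum 'I_m])
    = \prod_(j < m) ThetaS (s + j)%N (F j).
Proof.
elim: m s F => [|m IH] s F F_1; first by rewrite enum_ord0 big_ord0 ThetaS_ab_one.
rewrite enum_ordSl /= -map_comp big_ord_recl addn0 (ThetaS_mul _ _ (F_1 ord0)).
rewrite (IH _ (F \o lift ord0)) => [|j]; last exact: F_1.
congr (_ * _); apply: eq_bigr => j _ /=.
by rewrite /bump /= add1n addn1 addSnnS.
Qed.

Definition vS_weight m (T : {set 'I_m}) (j : 'I_m) : {poly int} :=
  if j \in T then 'X^(j.+1) else 1 - 'X^(j.+1).

Lemma ThetaS0_vS m (T : {set 'I_m}) : ThetaS 0 (vS T) = \prod_(j < m) vS_weight T j.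
Proof.
rewrite ThetaS_prod_ord => [|j]; last by case: ifP.
apply: eq_bigr => j _; rewrite /vS_weight add0n; case: ifP => _.
  by rewrite /ThetaS big_seq1 /= polyC1 mul1r addn0.
rewrite /ThetaS big_cons big_seq1 /= polyC1 mul1r !addn0 expr0 mulr1.
by rewrite polyCN polyC1 mulN1r.
Qed.

Lemma homogeneous_foldr_mul l :
  all (homogeneous 1%N) l -> homogeneous (size l) (foldr ab_mul ab_one l).
Proof. by elim: l => //= u l IH /andP [u_1 /IH /(homogeneous_mul u_1)]. Qed.

Lemma homogeneous_vS m (T : {set 'I_m}) : homogeneous m (vS T).
Proof.
have := @homogeneous_foldr_mul
  [seq (if j \in T then ab_b else ab_add ab_a (ab_opp ab_b)) | j <- enum 'I_m].
rewrite size_map size_enum_ord; apply.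
by rewrite all_map; apply/allP => j _ /=; case: ifP.
Qed.

Lemma homogeneous_PsiB n : homogeneous n.-1 (PsiB n).
Proof.
apply: homogeneous_sum; apply/allP => u /mapP [T _ ->].
exact/homogeneous_scale/homogeneous_vS.
Qed.

Lemma ThetaS0_PsiB_flagf n : ThetaS 0 (PsiB n)
  = \sum_(T : {set 'I_n.-1}) (flagf T)%:Z%:P * \prod_(j < n.-1) vS_weight T j.
Proof.
rewrite /PsiB ThetaS_sum big_map big_enum /=; apply: eq_bigr => T _.
by rewrite ThetaS_scale ThetaS0_vS.
Qed.

Lemma sum_subsets_setU1 (R : nmodType) (I : finType) (a : I) (D : {set I})
    (F : {set I} -> R) :
  a \notin D ->
  \sum_(T : {set I} | T \subset a |: D) F T
    = \sum_(T : {set I} | T \subset D) F T + \sum_(T : {set I} | T \subset D) F (a |: T).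
Proof.
move=> aD; rewrite (bigID (fun T : {set I} => a \in T)) /= addrC; congr (_ + _).
  by apply: eq_bigl => T; rewrite -[in RHS](setU1K aD) subsetD1.
rewrite (reindex_onto (fun T => a |: T) (fun T => T :\ a)); last first.
  by move=> T /andP [_ aT]; rewrite setD1K.
apply: eq_bigl => T; apply/idP/idP.
  move=> /andP [/andP [TD _] /eqP <-].
  by rewrite -(setU1K aD) setSD.
move=> TD; have aT : a \notin T by apply: contraNN aD => /(subsetP TD).
by rewrite setU1K // eqxx setU11 setUS.
Qed.

Section FlagSum.
Variable n : nat.
Local Notation m := n.-1.

Definition low_ranks k : {set 'I_m} := [set j : 'I_m | (j.+1 < k)%N].

(* Truncation of the sum computing [Theta (PsiB n)] to the ranks below [k], with
   chains in an [N]-element set; for [k = N = n] it is [Theta (PsiB n)] itself. *)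
Definition flag_sum k N : {poly int} :=
  \sum_(T : {set 'I_m} | T \subset low_ranks k)
    #|chains (prefix_set n N) T|%:Z%:P * \prod_(j in low_ranks k) vS_weight T j.

Lemma flag_sum1 N : flag_sum 1 N = 1.
Proof.
have low1 : low_ranks 1 = set0 by apply/setP => j; rewrite !inE.
rewrite /flag_sum low1 (eq_bigl (pred1 set0)) => [|T]; last by rewrite subset0.
by rewrite big_pred1_eq chains_set0 cards1 big_set0 polyC1 mulr1.
Qed.

Lemma flag_sumS k N : (k.+2 <= n)%N -> (N <= n)%N ->
  flag_sum k.+2 N = (1 - 'X^(k.+1)) * flag_sum k.+1 N
                    + 'C(N, k.+1)%:Z%:P * 'X^(k.+1) * flag_sum k.+1 k.+1.
Proof.
move=> k_lt_m N_le_n; have k_lt_m' : (k < m)%N by move: k_lt_m; case: n => //= n'; lia.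
set j0 := Ordinal k_lt_m'.
have low_rankS : low_ranks k.+2 = j0 |: low_ranks k.+1.
  by apply/setP => j; rewrite !inE -val_eqE /= ltnS leq_eqVlt ltnS.
have j0_low : j0 \notin low_ranks k.+1 by rewrite !inE ltnn.
have j0_notin (T : {set 'I_m}) : T \subset low_ranks k.+1 -> j0 \notin T.
  by move=> T_low; apply: contraNN j0_low => /(subsetP T_low).
rewrite /flag_sum low_rankS sum_subsets_setU1 //; congr (_ + _).
  rewrite mulr_sumr; apply: eq_bigr => T T_low.
  by rewrite big_setU1 //= /vS_weight (negPf (j0_notin T T_low)); ring.
rewrite mulr_sumr; apply: eq_bigr => T T_low.
have T_lt_j0 j : j \in T -> (j < j0)%N by move=> /(subsetP T_low); rewrite inE.
rewrite card_chains_prefix_setU1 ?j0_notin //; last by rewrite /=; lia.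
rewrite big_setU1 //= {1}/vS_weight setU11 (eq_bigr (vS_weight T)) => [|j j_low].
  by rewrite PoszM polyCM; ring.
have j_neq_j0 : j != j0 by apply: contraNneq j0_low => <-.
by rewrite /vS_weight in_setU1 (negPf j_neq_j0).
Qed.

End FlagSum.

(* The solution of the recursion [flag_sumS], up to the factor [qfact k]. *)
Definition bin_weight k N : {poly int} :=
  \sum_(s < k) 'C(N, s)%:Z%:P * 'X^s * (1 - 'X) ^+ (k.-1 - s).

Lemma bin_weightS k N :
  bin_weight k.+2 N = (1 - 'X) * bin_weight k.+1 N + 'C(N, k.+1)%:Z%:P * 'X^(k.+1).
Proof.
rewrite /bin_weight big_ord_recr /= subnn expr0 mulr1; congr (_ + _).
rewrite mulr_sumr; apply: eq_bigr => s _ /=.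
have s_le_k : (s <= k)%N by rewrite -ltnS.
by rewrite subSn // exprS; ring.
Qed.

Lemma mul_1subX_qint k : (1 - 'X) * qint k = 1 - 'X^k.
Proof.
elim: k => [|k IH]; first by rewrite /qint big_ord0 expr0 mulr0 subrr.
by rewrite qintS mulrDr IH exprS; ring.
Qed.

Lemma bin_weight_diag k : bin_weight k k = qint k.
Proof.
have oneX_neq0 : (1 - 'X : {poly int}) != 0.
  by apply/eqP => /(congr1 (fun p : {poly int} => p`_1)); rewrite coefB coef1 coefX coef0.
apply: (mulfI oneX_neq0); rewrite mul_1subX_qint.
case: k => [|k]; first by rewrite /bin_weight big_ord0 mulr0 expr0 subrr.
have binomial_expansion : 1 - 'X^(k.+1)
    = \sum_(s < k.+1) (1 - 'X : {poly int}) ^+ (k.+1 - s) * 'X^s *+ 'C(k.+1, s).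
  have := exprDn (1 - 'X : {poly int}) 'X k.+1.
  by rewrite subrK expr1n big_ord_recr /= subnn expr0 mul1r binn mulr1n => {1}->; rewrite addrK.
rewrite binomial_expansion /bin_weight mulr_sumr; apply: eq_bigr => s _ /=.
have s_le_k : (s <= k)%N by rewrite -ltnS.
rewrite subSn // exprS -mulr_natr -[X in X%:P]natz polyC_natr; ring.
Qed.

Lemma flag_sum_closed n k N : (k < N)%N -> (N <= n)%N ->
  flag_sum n k.+1 N = qfact k * bin_weight k.+1 N.
Proof.
elim: k N => [|k IH] N k_lt_N N_le_n.
  by rewrite flag_sum1 /qfact big_ord0 /bin_weight big_ord1 bin0 polyC1 !mul1r expr0.
rewrite flag_sumS ?IH //; try lia.
by rewrite bin_weight_diag bin_weightS qfactS -mul_1subX_qint; ring.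
Qed.

Lemma ThetaS0_PsiB n : ThetaS 0 (PsiB n.+1) = qfact n.+1.
Proof.
rewrite ThetaS0_PsiB_flagf.
have low_all : low_ranks n.+1 n.+1 = setT by apply/setP => j; rewrite !inE ltnS ltn_ord.
have -> : qfact n.+1 = flag_sum n.+1 n.+1 n.+1.
  by rewrite flag_sum_closed // bin_weight_diag -qfactS.
rewrite /flag_sum low_all; apply: eq_big => [T|T _]; first by rewrite subsetT.
by rewrite flagf_chains; congr (_ * _); apply: eq_bigl => j; rewrite inE.
Qed.

Lemma homogeneous_PhiCheck n i : (i < n)%N -> homogeneous n (PhiCheck n i).
Proof.
elim: i n => [|i IH] [|n] // i_lt_n /=.
  by rewrite -[X in homogeneous X _]addn1; apply: homogeneous_mul; first exact: homogeneous_PsiB.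
exact/homogeneous_G/IH.
Qed.

Lemma ThetaS_c s : ThetaS s ab_c = 1 + 'X^(s.+1).
Proof. by rewrite /ThetaS big_cat !big_seq1 /= polyC1 !mul1r !addn0 expr0. Qed.

Lemma Theta_PhiCheck0 n : (0 < n)%N -> Theta (PhiCheck n 0) = qint (2 * n) * qfact n.-1.
Proof.
case: n => // n _; rewrite Theta_ThetaS0 /= (ThetaS_mul _ _ (homogeneous_PsiB n.+1)).
rewrite ThetaS0_PsiB ThetaS_c add0n /= qfactS mul2n -addnn qintD; ring.
Qed.

Theorem mainTheorem4 (n i : nat) :
  (1 <= n)%N -> (i <= n - 1)%N ->
  Theta (PhiCheck n i) = 'X^i * qint (2 * (n - i)) * qfact (n - 1).
Proof.
elim: i n => [|i IH] n n_gt0 i_le.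
  by rewrite Theta_PhiCheck0 // subn0 subn1 expr0 mul1r.
have i_lt_pn : (i < n.-1)%N by lia.
rewrite Theta_ThetaS0 /= (ThetaS0_G (homogeneous_PhiCheck i_lt_pn)) -Theta_ThetaS0.
rewrite IH; [|lia|lia].
have -> : (n - i.+1 = n.-1 - i)%N by lia.
have -> : (n - 1 = (n.-1 - 1).+1)%N by lia.
rewrite qfactS subn1 prednK; last lia.
by rewrite exprS; ring.
Qed.
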